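(* Let $I\ge1$, $\varphi\ge0$, $\psi\in(0,\infty)^I$, $\boldsymbol\lambda=(\boldsymbol\lambda^{ji})\in(0,\infty)^{I\times I}$ with $\psi^i+\sum_j\boldsymbol\lambda^{ji}=1$ for all $i$. Let $\overline\delta\ge0$, $\overline\tau\in\mathbb R_+^I$ with $\overline\delta\max_i\overline\tau^i<1$, $\overline\zeta\in\mathbb R_+^{I\times I}$, $\overline\kappa\in\mathbb R_+^I$, and define $$\Psi^i:=\psi^i\frac{1-\overline\tau^i\overline\delta}{1+\overline\kappa^i\overline\delta},\qquad \Lambda^{ji}:=\boldsymbol\lambda^{ji}\frac{1-\overline\tau^i\overline\delta}{1+\overline\zeta^{ji}\overline\delta}\,\frac{1+\overline\kappa^j\overline\delta}{1+\overline\kappa^i\overline\delta}.$$ Let $A\in(0,\infty)^I$ and consider the system, for $(C,Y)\in(0,\infty)^I\times(0,\infty)^I$ and all $i$, $$Y^i=C^i+\sum_{j}\Lambda^{ij}\frac{C^i}{C^j}Y^j,\qquad Y^i=A^i\Big[\Psi^i\frac{Y^i}{C^i}\Big]^{\frac{\psi^i}{1+\varphi}}\prod_{j}\Big[\Lambda^{ji}C^j\frac{Y^i}{C^i}\Big]^{\boldsymbol\lambda^{ji}}.$$ Assume that the matrix $(\delta_{ij}-\Lambda^{ij})_{i,j}$ is nonsingular and that the unique vector $\mathfrak e\in\mathbb R^I$ with $\mathfrak e^i=1+\sum_j\Lambda^{ij}\mathfrak e^j$ for all $i$ has positive entries, and that the matrix $N:=(\delta_{ij}-\boldsymbol\lambda^{ji})_{i,j}$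 is nonsingular. Then the system has a unique solution $(C,Y)\in(0,\infty)^I\times(0,\infty)^I$; it satisfies $Y^i/C^i=\mathfrak e^i$ for all $i$, $$(\log C^i)_{i}=N^{-1}\big(\log A^i+\mathfrak v^i\big)_{i},\qquad \log Y^i=\log C^i+\log\mathfrak e^i,$$ where $\mathfrak v^i:=-\frac{\varphi\psi^i}{1+\varphi}\log\mathfrak e^i+\frac{\psi^i}{1+\varphi}\log\Psi^i+\sum_j\boldsymbol\lambda^{ji}\log\Lambda^{ji}$.
   Context: $\delta_{ij}$ is the Kronecker delta. The system is the market-equilibrium system of a multisectoral economy with logarithmic utility of consumption; $C^i$ is household consumption of good $i$, $Y^i$ output of sector $i$, $A^i$ total factor productivity of sector $i$. *)

From HB Require Import structures.
From mathcomp Require Import all_boot all_order all_algebra.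
From mathcomp Require Import boolp classical_sets reals exp.
Set Implicit Arguments. Unset Strict Implicit. Unset Printing Implicit Defensive.
Import Order.TTheory GRing.Theory Num.Theory.
Local Open Scope ring_scope.

Section Defs.
Variables (R : realType) (n : nat).

Definition PsiV (psi taubar kappabar : 'I_n -> R) (db : R) (i : 'I_n) : R :=
  psi i * ((1 - taubar i * db) / (1 + kappabar i * db)).

(* Lambda^{ji} = lam^{ji} (1 - taubar^i db)/(1 + zetabar^{ji} db)
                 * (1 + kappabar^j db)/(1 + kappabar^i db);
   matrices are stored so that  M j i  denotes  M^{ji}. *)
Definition LamM (lam zetabar : 'M[R]_n) (taubar kappabar : 'I_n -> R) (db : R)
  : 'M[R]_n :=
  \matrix_(j, i) (lam j i * ((1 - taubar i * db) / (1 + zetabar j i * db))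
                          * ((1 + kappabar j * db) / (1 + kappabar i * db))).

Definition eq_system (phi : R) (psi A : 'I_n -> R) (lam Lam : 'M[R]_n)
  (Psi : 'I_n -> R) (C Y : 'I_n -> R) : Prop :=
  forall i : 'I_n,
    Y i = C i + \sum_j Lam i j * (C i / C j) * Y j /\
    Y i = A i * (Psi i * (Y i / C i)) `^ (psi i / (1 + phi))
              * \prod_j (Lam j i * C j * (Y i / C i)) `^ (lam j i).

Definition vV (phi : R) (psi : 'I_n -> R) (lam Lam : 'M[R]_n)
  (Psi e : 'I_n -> R) (i : 'I_n) : R :=
  - (phi * psi i / (1 + phi)) * ln (e i) + psi i / (1 + phi) * ln (Psi i)
  + \sum_j lam j i * ln (Lam j i).

End Defs.

From HB Require Import structures.
From mathcomp Require Import all_boot all_order all_algebra.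
From mathcomp Require Import boolp reals exp.
From mathcomp Require Import sequences ring lra.
Set Implicit Arguments. Unset Strict Implicit. Unset Printing Implicit Defensive.
Import Order.TTheory GRing.Theory Num.Theory.
Local Open Scope ring_scope.

(* Writing Y = C e, market clearing becomes the linear system
   e = 1 + Lambda e for the ratios e = Y / C, which pins e down since
   1 - Lambda is invertible.  Given those ratios, the logarithm of the
   production equation is the linear system N (log C) = log A + v, since
   the exponents psi^i / (1 + phi) and lambda^{ji} sum to
   1 - phi psi^i / (1 + phi).  Invertibility of N then gives existence and
   uniqueness of log C, hence of (C, Y). *)

Lemma ln_prod (R : realType) (I : finType) (f : I -> R) :
  (forall j, 0 < f j) -> ln (\prod_j f j) = \sum_j ln (f j).
Proof.
move=> f_gt0.
have := @big_ind2 R R (fun x y => 0 < x /\ ln x = y) 1 *%R 0 +%R.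
move=> /(_ _ _ I (index_enum I) xpredT f (fun j => ln (f j))) [] //.
- by rewrite ln1.
- move=> x1 x2 y1 y2 [x1_gt0 <-] [x2_gt0 <-].
  by rewrite mulr_gt0 // lnM.
Qed.

Lemma mulfKl (R : fieldType) (x y : R) : x != 0 -> x * y / x = y.
Proof. by move=> x_neq0; rewrite mulrC mulKf. Qed.

Section DeltaSubSystem.
Variables (R : fieldType) (n : nat) (B : 'I_n -> 'I_n -> R).

Let M := \matrix_(i, j) ((i == j)%:R - B i j).

Lemma delta_sub_mulmx_col (f : 'I_n -> R) i :
  (M *m \col_j f j) i 0 = f i - \sum_j B i j * f j.
Proof.
rewrite mxE; under eq_bigr do rewrite !mxE mulrBl.
rewrite sumrB (bigD1 i) //= eqxx mul1r big1 ?addr0 // => j ji.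
by rewrite eq_sym (negbTE ji) mul0r.
Qed.

Lemma delta_sub_solveP (d w : 'I_n -> R) : M \in unitmx ->
  (forall i, d i - \sum_j B i j * d j = w i) <->
  \col_j d j = invmx M *m \col_j w j.
Proof.
move=> M_unit; split=> [d_sol | d_col i].
  suff <- : M *m \col_j d j = \col_j w j by rewrite mulKmx.
  by apply/colP => i; rewrite delta_sub_mulmx_col d_sol mxE.
by rewrite -delta_sub_mulmx_col d_col mulKVmx // mxE.
Qed.

End DeltaSubSystem.

Lemma one_sub_mul_bigmax_gt0 (R : realType) (n : nat) (tau : 'I_n -> R) (db : R) i :
  0 <= db -> (forall i, 0 <= tau i) -> db * \big[Num.max/0]_(i < n) tau i < 1 ->
  0 < 1 - tau i * db.
Proof.
move=> db_ge0 tau_ge0 db_tau_lt1.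
have : tau i * db <= \big[Num.max/0]_(i < n) tau i * db.
  by rewrite ler_wpM2r // le_bigmax.
rewrite [X in _ <= X]mulrC; lra.
Qed.

Section Positivity.
Variables (R : realType) (n : nat) (psi taubar kappabar : 'I_n -> R)
  (lam zetabar : 'M[R]_n) (db : R).
Hypotheses (db_ge0 : 0 <= db) (taubar_ge0 : forall i, 0 <= taubar i)
  (db_taubar_lt1 : db * \big[Num.max/0]_(i < n) taubar i < 1)
  (zetabar_ge0 : forall j i, 0 <= zetabar j i)
  (kappabar_ge0 : forall i, 0 <= kappabar i).

Let one_add_gt0 (x : R) : 0 <= x -> 0 < 1 + x * db.
Proof. by move=> x_ge0; have := mulr_ge0 x_ge0 db_ge0; lra. Qed.

Lemma PsiV_gt0 i : 0 < psi i -> 0 < PsiV psi taubar kappabar db i.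
Proof.
move=> psi_gt0; rewrite /PsiV mulr_gt0 ?divr_gt0 ?one_add_gt0 //.
exact: one_sub_mul_bigmax_gt0.
Qed.

Lemma LamM_gt0 j i : 0 < lam j i -> 0 < LamM lam zetabar taubar kappabar db j i.
Proof.
move=> lam_gt0; rewrite mxE !mulr_gt0 ?invr_gt0 ?one_add_gt0 //.
exact: one_sub_mul_bigmax_gt0.
Qed.

End Positivity.

Section Equilibrium.
Variables (R : realType) (n : nat) (phi : R) (psi A Psi e : 'I_n -> R)
  (lam Lam : 'M[R]_n).
Hypotheses (phi_ge0 : 0 <= phi) (A_gt0 : forall i, 0 < A i)
  (Psi_gt0 : forall i, 0 < Psi i) (Lam_gt0 : forall j i, 0 < Lam j i)
  (e_gt0 : forall i, 0 < e i)
  (psi_lam_sum1 : forall i, psi i + \sum_j lam j i = 1).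

Let v i := ln (A i) + vV phi psi lam Lam Psi e i.

Let output i (C : 'I_n -> R) :=
  A i * (Psi i * e i) `^ (psi i / (1 + phi))
      * \prod_j (Lam j i * C j * e i) `^ (lam j i).

Lemma output_gt0 i (C : 'I_n -> R) : (forall j, 0 < C j) -> 0 < output i C.
Proof.
move=> C_gt0; rewrite !mulr_gt0 ?powR_gt0 ?prodr_gt0 ?mulr_gt0 // => j _.
by rewrite powR_gt0 // !mulr_gt0.
Qed.

Lemma ln_output i (C : 'I_n -> R) : (forall j, 0 < C j) ->
  ln (output i C) = v i + \sum_j lam j i * ln (C j) + ln (e i).
Proof.
move=> C_gt0.
have pow_gt0 j : 0 < (Lam j i * C j * e i) `^ (lam j i).
  by rewrite powR_gt0 // !mulr_gt0.
have Psi_e_gt0 : 0 < Psi i * e i by rewrite mulr_gt0.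
rewrite /output /v /vV lnM ?posrE ?prodr_gt0 ?mulr_gt0 ?powR_gt0 //.
rewrite lnM ?posrE ?powR_gt0 ?mulr_gt0 // ln_prod //.
under eq_bigr do rewrite ln_powR !lnM ?posrE ?mulr_gt0 // !mulrDr.
rewrite ln_powR lnM ?posrE // !big_split /= -mulr_suml.
have -> : \sum_j lam j i = 1 - psi i by rewrite -(psi_lam_sum1 i) addrC addKr.
have : 1 + phi != 0 by rewrite gt_eqF // ltr_pwDl.
set s1 := \sum_(j < n) _; set s2 := \sum_(j < n) _.
by move=> ?; field.
Qed.

Lemma production_ln_iff (C : 'I_n -> R) : (forall j, 0 < C j) ->
  (forall i, C i * e i = A i * (Psi i * (C i * e i / C i)) `^ (psi i / (1 + phi))
      * \prod_j (Lam j i * C j * (C i * e i / C i)) `^ (lam j i)) <->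
  (forall i, ln (C i) - \sum_j lam j i * ln (C j) = v i).
Proof.
move=> C_gt0.
have ratio i : C i * e i / C i = e i by rewrite mulfKl ?gt_eqF.
have ln_Ce i : ln (C i * e i) = ln (C i) + ln (e i) by rewrite lnM ?posrE.
split=> [prod_eq i | ln_eq i].
  have := congr1 (@ln R) (prod_eq i); rewrite !ratio -/(output i C) ln_output // ln_Ce.
  by move=> ?; lra.
rewrite ratio -/(output i C).
apply: ln_inj; rewrite ?posrE ?output_gt0 ?mulr_gt0 //.
by rewrite ln_output // ln_Ce -ln_eq; ring.
Qed.

Lemma clearing_ratio_iff (C Y : 'I_n -> R) i : (forall j, 0 < C j) ->
  (Y i = C i + \sum_j Lam i j * (C i / C j) * Y j) <->
  (Y i / C i = 1 + \sum_j Lam i j * (Y j / C j)).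
Proof.
move=> C_gt0.
have -> : \sum_j Lam i j * (C i / C j) * Y j = C i * \sum_j Lam i j * (Y j / C j).
  by rewrite mulr_sumr; apply: eq_bigr => j _; field; rewrite gt_eqF.
have Ci_neq0 : C i != 0 by rewrite gt_eqF.
split=> [-> | ratio_eq].
  by rewrite mulrDl divff // mulfKl.
by rewrite -[Y i](divfK Ci_neq0) ratio_eq; ring.
Qed.

Hypotheses (e_fix : forall i, e i = 1 + \sum_j Lam i j * e j)
  (Lam_unit : \matrix_(i, j) ((i == j)%:R - Lam i j) \in unitmx).

Lemma clearing_ratio_eq_e (C Y : 'I_n -> R) : (forall j, 0 < C j) ->
  (forall i, Y i = C i + \sum_j Lam i j * (C i / C j) * Y j) ->
  Y = (fun i => C i * e i).
Proof.
move=> C_gt0 clearing.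
have fix_sol x : (forall i, x i = 1 + \sum_j Lam i j * x j) ->
    \col_j x j = invmx (\matrix_(i, j) ((i == j)%:R - Lam i j)) *m \col_j 1.
  by move=> x_fix; apply/delta_sub_solveP => // i; rewrite {1}x_fix addrK.
have ratio_fix i : Y i / C i = 1 + \sum_j Lam i j * (Y j / C j).
  exact/clearing_ratio_iff.
have ratio_e : \col_j (Y j / C j) = \col_j e j.
  by rewrite (fix_sol _ ratio_fix) (fix_sol _ e_fix).
apply: funext => i; have /colP/(_ i) := ratio_e; rewrite !mxE => <-.
by rewrite mulrC divfK // gt_eqF.
Qed.

Lemma eq_system_e_iff (C : 'I_n -> R) : (forall j, 0 < C j) ->
  eq_system phi psi A lam Lam Psi C (fun i => C i * e i) <->
  (forall i, ln (C i) - \sum_j lam j i * ln (C j) = v i).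
Proof.
move=> C_gt0; rewrite -production_ln_iff //; split=> [sys i | prod_eq i].
  exact: (sys i).2.
split; last exact: prod_eq.
have ratio j : C j * e j / C j = e j by rewrite mulfKl ?gt_eqF.
apply/clearing_ratio_iff => //; rewrite ratio.
by under eq_bigr do rewrite ratio.
Qed.

End Equilibrium.

Theorem mainTheorem5 (R : realType) (n : nat) (phi : R) (psi : 'I_n -> R)
  (lam : 'M[R]_n) (db : R) (taubar : 'I_n -> R) (zetabar : 'M[R]_n)
  (kappabar : 'I_n -> R) (A : 'I_n -> R) (e : 'I_n -> R) :
  (0 < n)%N ->
  0 <= phi ->
  (forall i, 0 < psi i) ->
  (forall j i, 0 < lam j i) ->
  (forall i, psi i + \sum_j lam j i = 1) ->
  0 <= db ->
  (forall i, 0 <= taubar i) ->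
  db * \big[Num.max/0]_(i < n) taubar i < 1 ->
  (forall j i, 0 <= zetabar j i) ->
  (forall i, 0 <= kappabar i) ->
  (forall i, 0 < A i) ->
  let Psi := PsiV psi taubar kappabar db in
  let Lam := LamM lam zetabar taubar kappabar db in
  (\matrix_(i, j) ((i == j)%:R - Lam i j)) \in unitmx ->
  (forall i, e i = 1 + \sum_j Lam i j * e j) ->
  (forall i, 0 < e i) ->
  let N := \matrix_(i, j) ((i == j)%:R - lam j i) in
  N \in unitmx ->
  exists C Y : 'I_n -> R,
    ((forall i, 0 < C i) /\ (forall i, 0 < Y i)) /\
        eq_system phi psi A lam Lam Psi C Y /\
        (forall C' Y' : 'I_n -> R,
            (forall i, 0 < C' i) -> (forall i, 0 < Y' i) ->
            eq_system phi psi A lam Lam Psi C' Y' -> C' = C /\ Y' = Y) /\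
        (forall i, Y i / C i = e i) /\
        \col_i ln (C i) =
          invmx N *m \col_i (ln (A i) + vV phi psi lam Lam Psi e i)
      /\ (forall i, ln (Y i) = ln (C i) + ln (e i)).
Proof.
move=> _ phi_ge0 psi_gt0 lam_gt0 sum1 db_ge0 tau_ge0 db_tau_lt1 zeta_ge0
  kappa_ge0 A_gt0 Psi Lam Lam_unit e_fix e_gt0 N N_unit.
have Psi_gt0 i : 0 < Psi i by apply: PsiV_gt0.
have Lam_gt0 j i : 0 < Lam j i by apply: LamM_gt0.
pose lnC := invmx N *m \col_i (ln (A i) + vV phi psi lam Lam Psi e i).
pose C i := expR (lnC i 0).
have C_gt0 i : 0 < C i by apply: expR_gt0.
have col_lnC : \col_i ln (C i) = lnC by apply/colP => i; rewrite mxE expRK.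
have system_iff := eq_system_e_iff phi_ge0 A_gt0 Psi_gt0 Lam_gt0 e_gt0 sum1 e_fix.
have solve_N d := delta_sub_solveP (B := fun i j => lam j i) d
  (fun i => ln (A i) + vV phi psi lam Lam Psi e i) N_unit.
exists C, (fun i => C i * e i); split; first by split=> // i; rewrite mulr_gt0.
split.
  by apply/system_iff/solve_N.
split.
  move=> C' Y' C'_gt0 _ sys.
  have Y'E := clearing_ratio_eq_e e_fix Lam_unit C'_gt0 (fun i => (sys i).1).
  subst Y'; suff -> : C' = C by [].
  move/system_iff: sys => /(_ C'_gt0) /solve_N; rewrite -/lnC -col_lnC => lnCE.
  apply: funext => i; move/colP/(_ i): lnCE; rewrite !mxE.
  by move/ln_inj; apply; rewrite posrE.
split; first by move=> i; rewrite mulfKl ?gt_eqF.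
by split=> // i; rewrite lnM ?posrE.
Qed.
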